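(* Let $\mathcal{X}$ be a finite set of actions, $\mathcal{Y}$ a finite set of responses, $\mathcal{H}\subseteq\mathcal{Y}^{\mathcal{X}}$, $\mathrm{cost}:\mathcal{X}\times\mathcal{Y}\to\mathbb{R}_+$. Let $f:2^{\mathcal{X}\times\mathcal{Y}}\to\mathbb{R}_+$ and $Q>0$, and suppose $f$ is submodular and $f(\emptyset)=0$. If $\mathrm{OPT}<\phi_{\min}$, then $\max_{x\in\mathcal{X}}u^f(x,\emptyset)\ge Q/\mathrm{OPT}$.
   Context: The true state is an unknown $h^*\in\mathcal{H}$. An interactive algorithm, given the observed set $S$ of action-response pairs, either selects an action $x$ (observing $(x,h^*(x))$) or terminates; $S^h[\mathcal{A}]$ is the set collected until termination when $h^*=h$; $\mathrm{cost}(\mathcal{A})=\max_{h\in\mathcal{H}}\sum_{(x,y)\in S^h[\mathcal{A}]}\mathrm{cost}(x,y)$; $\mathrm{OPT}$ is the minimum of $\mathrm{cost}(\mathcal{A})$ over interactive algorithms with $f(S^h[\mathcal{A}])\ge Q$ for all $h\in\mathcal{H}$. Version space $V(S)=\{h\in\mathcal{H}\mid\forall(x,y)\in S,\ y=h(x)\}$; $\delta_g(z\mid A)=g(A\cup\{z\})-g(A)$; $u^f(x,S)=\min_{h\in V(S)}\frac{\delta_{\min(f,Q)}((x,h(x))\mid S)}{\mathrm{cost}(x,h(x))}$. $\phi(x)$ is the second-smallest value of the multiset $\{\mathrm{cost}(x,y)\mid y\in\mathcal{Y}\}$ and $\phi_{\min}=\min_{x\in\mathcal{X}}\phi(x)$.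 *)

From mathcomp Require Import all_boot all_order all_algebra.
Set Implicit Arguments. Unset Strict Implicit. Unset Printing Implicit Defensive.
Import Order.TTheory GRing.Theory Num.Theory.
Local Open Scope ring_scope.

Section Defs.
Variables (R : realFieldType) (X Y : finType).

Notation obs := {set (X * Y)}.

Definition submodular (f : obs -> R) : Prop :=
  forall A B : obs, f (A :|: B) + f (A :&: B) <= f A + f B.

Definition vspace (H : {set {ffun X -> Y}}) (S : obs) : {set {ffun X -> Y}} :=
  [set h in H | [forall p in S, p.2 == h p.1]].

Definition delta (g : obs -> R) (z : X * Y) (A : obs) : R := g (z |: A) - g A.

Definition truncf (f : obs -> R) (Q : R) : obs -> R := fun S => Num.min (f S) Q.

(* minimum of F over the finite set A (arbitrary value 0 if A is empty) *)
Definition setmin (T : finType) (A : {set T}) (F : T -> R) : R :=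
  if [pick t in A] is Some t0 then \big[Num.min/F t0]_(t in A) F t else 0.

Definition uf (H : {set {ffun X -> Y}}) (cost : X * Y -> R) (f : obs -> R) (Q : R)
    (x : X) (S : obs) : R :=
  setmin (vspace H S) (fun h => delta (truncf f Q) (x, h x) S / cost (x, h x)).

Definition phi (cost : X * Y -> R) (x : X) : R :=
  nth 0 (sort <=%R [seq cost (x, y) | y <- enum Y]) 1.

Definition phi_min (cost : X * Y -> R) : R := setmin [set: X] (phi cost).

(* An interactive algorithm: given the observed set S, select Some action or
   terminate (None). *)
Definition ialg := obs -> option X.

Fixpoint run (A : ialg) (h : {ffun X -> Y}) (n : nat) : obs :=
  match n with
  | 0 => set0
  | n.+1 => let S := run A h n in
            match A S with Some x => (x, h x) |: S | None => S end
  end.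

(* A run that terminates at all terminates within #|X * Y| rounds (each
   non-final round adds a new pair, otherwise the run loops forever), and once
   terminated the state stays constant; so this is S^h[A]. *)
Definition Sfinal (A : ialg) (h : {ffun X -> Y}) : obs := run A h #|{: X * Y}|.

Definition terminates (A : ialg) (h : {ffun X -> Y}) : Prop :=
  exists n, A (run A h n) = None.

Definition costS (cost : X * Y -> R) (S : obs) : R := \sum_(p in S) cost p.

(* cost(A) = max_{h in H} cost of S^h[A] (costs are nonnegative and H nonempty) *)
Definition costA (H : {set {ffun X -> Y}}) (cost : X * Y -> R) (A : ialg) : R :=
  \big[Num.max/0]_(h in H) costS cost (Sfinal A h).

Definition feasible (H : {set {ffun X -> Y}}) (f : obs -> R) (Q : R) (A : ialg) : Prop :=
  forall h, h \in H -> terminates A h /\ Q <= f (Sfinal A h).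

Definition is_OPT (H : {set {ffun X -> Y}}) (cost : X * Y -> R) (f : obs -> R)
    (Q : R) (OPT : R) : Prop :=
  (exists A, feasible H f Q A /\ costA H cost A = OPT) /\
  (forall A, feasible H f Q A -> OPT <= costA H cost A).

End Defs.

(* Fix an optimal algorithm A.  Every pair it observes costs at most OPT <
   phi_min <= phi(x), so it is the unique cheapest response to its action x;
   hence all hypotheses in H answer A's queries alike and A collects the same
   set S0 whatever the true hypothesis.  Since min(f, Q) is subadditive and
   equals Q on S0, its values on the singletons of S0 sum to at least Q, while
   their costs sum to at most OPT; so some p in S0 has
   min(f, Q)({p}) / cost p >= Q / OPT, and p is consistent with every h in H. *)

From mathcomp Require Import all_boot all_order all_algebra.
Import Order.TTheory GRing.Theory Num.Theory.
Local Open Scope ring_scope.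

Set Implicit Arguments.
Unset Strict Implicit.
Unset Printing Implicit Defensive.

Lemma sorted_count_lt_nth d (T : orderType d) (x0 : T) (s : seq T) n :
  sorted <=%O s -> (count (fun x => (x < nth x0 s n)%O) s <= n)%N.
Proof.
move=> s_sorted; set a := nth x0 s n.
have [n_lt|] := ltnP n (size s); last exact: leq_trans (count_size _ _).
have tail_ge : all (fun x => (a <= x)%O) (drop n.+1 s).
  have := drop_sorted n s_sorted; rewrite (drop_nth x0 n_lt) /= -/a.
  exact/order_path_min/le_trans.
have tail_count : count (fun x => (x < a)%O) (drop n.+1 s) = 0%N.
  apply/eqP; rewrite -leqn0 leqNgt -has_count.
  by apply/hasPn => x /(allP tail_ge); rewrite leNgt.
rewrite -(cat_take_drop n s) count_cat (drop_nth x0 n_lt) /= ltxx tail_count !addn0.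
by apply: leq_trans (count_size _ _) _; rewrite size_take n_lt.
Qed.

Section SetFunctions.
Variables (R : realFieldType) (T : finType).

Lemma setmin_le (A : {set T}) (F : T -> R) t : t \in A -> setmin A F <= F t.
Proof.
move=> tA; rewrite /setmin; case: pickP => [t0 _|/(_ t)]; last by rewrite tA.
exact: bigmin_le_cond.
Qed.

Lemma le_setmin (A : {set T}) (F : T -> R) c :
  A != set0 -> (forall t, t \in A -> c <= F t) -> c <= setmin A F.
Proof.
move=> /set0Pn[t tA] c_le; rewrite /setmin.
case: pickP => [t0 t0A|/(_ t)]; last by rewrite tA.
by apply/bigmin_geP; split; apply: c_le.
Qed.

Lemma subadd_le_sum_set1 (g : {set T} -> R) :
  g set0 = 0 -> (forall A B, g (A :|: B) <= g A + g B) ->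
  forall S, g S <= \sum_(t in S) g [set t].
Proof.
move=> g0 g_subadd S.
have S_cover : \bigcup_(t in S) [set t] = S.
  apply/setP => t; apply/bigcupP/idP => [[u uS /set1P -> //]|tS].
  by exists t; rewrite ?set11.
rewrite -{1}S_cover.
apply: (big_ind2 (fun A r => g A <= r)) => [|A r B r' gA gB|//]; first by rewrite g0.
exact: le_trans (g_subadd A B) (lerD gA gB).
Qed.

Lemma exists_ge_share (S : {set T}) (a w : T -> R) (Q : R) :
  0 < \sum_(t in S) w t -> Q <= \sum_(t in S) a t ->
  exists2 t, t \in S & Q / (\sum_(t in S) w t) * w t <= a t.
Proof.
move=> w_gt0 Q_le; apply/exists_inP; apply: contraLR Q_le => /exists_inP all_lt.
have [t tS] : exists t, t \in S.
  by apply/set0Pn; apply: contraTneq w_gt0 => ->; rewrite big_set0 ltxx.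
rewrite -ltNge; apply: lt_le_trans (_ : _ < \sum_(u in S) Q / (\sum_(t in S) w t) * w u) _.
  apply: ltr_sum => [|u uS]; first by apply/hasP; exists t; rewrite ?mem_index_enum.
  by rewrite ltNge; apply/negP => share_le; apply: all_lt; exists u.
by rewrite -mulr_sumr mulfVK ?gt_eqF.
Qed.

End SetFunctions.

Section Observations.
Variables (R : realFieldType) (X Y : finType).

Lemma submodular_subadd (f : {set X * Y} -> R) :
  (forall A, 0 <= f A) -> submodular f -> forall A B, f (A :|: B) <= f A + f B.
Proof. by move=> f_ge0 f_sub A B; apply: le_trans (f_sub A B); rewrite lerDl. Qed.

Lemma truncf_subadd (f : {set X * Y} -> R) (Q : R) :
  0 <= Q -> (forall A, 0 <= f A) -> (forall A B, f (A :|: B) <= f A + f B) ->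
  forall A B, truncf f Q (A :|: B) <= truncf f Q A + truncf f Q B.
Proof.
move=> Q_ge0 f_ge0 f_subadd A B; rewrite /truncf.
have [QfA|fAQ] := leP Q (f A).
  by rewrite ge_min lerDl le_min f_ge0 Q_ge0 orbT.
have [QfB|fBQ] := leP Q (f B).
  by rewrite ge_min lerDr f_ge0 orbT.
by rewrite ge_min f_subadd.
Qed.

Lemma phi_lt_unique (cost : X * Y -> R) x y1 y2 :
  cost (x, y1) < phi cost x -> cost (x, y2) < phi cost x -> y1 = y2.
Proof.
move=> lt1 lt2; apply/eqP; set s := [seq cost (x, y) | y <- enum Y].
apply: contraTT (sorted_count_lt_nth 0 1 (sort_sorted (@le_total _ R) s)) => y12.
rewrite -ltnNge -/(phi cost x) (permP (permEl (perm_sort _ _))) count_map -size_filter.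
apply: (@uniq_leq_size _ [:: y1; y2]) => [|y]; first by rewrite /= inE y12.
by rewrite !inE mem_filter mem_enum andbT => /orP[] /eqP ->.
Qed.

Lemma vspace_set0 (H : {set {ffun X -> Y}}) : vspace H set0 = H.
Proof. by apply/setP => h; rewrite inE andb_idr // => _; apply/forall_inP => p; rewrite inE. Qed.

Lemma cost_le_costS (cost : X * Y -> R) (S : {set X * Y}) p :
  (forall q, 0 <= cost q) -> p \in S -> cost p <= costS cost S.
Proof. by move=> cost_ge0 pS; rewrite /costS (bigD1 p) //= lerDl sumr_ge0. Qed.

Lemma costS_le_costA (H : {set {ffun X -> Y}}) (cost : X * Y -> R) (A : ialg X Y) h :
  h \in H -> costS cost (Sfinal A h) <= costA H cost A.
Proof. by move=> hH; apply: (le_bigmax_cond _ (fun h => costS cost (Sfinal A h)) hH). Qed.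

Section Runs.
Variable A : ialg X Y.

Lemma run_subset h m n : (m <= n)%N -> run A h m \subset run A h n.
Proof.
elim: n => [|n IH]; first by rewrite leqn0 => /eqP ->.
rewrite leq_eqVlt => /predU1P[-> //|m_lt]; apply: subset_trans (IH m_lt) _ => /=.
by case: (A _) => // x; apply: subsetUr.
Qed.

Lemma run_graph h n p : p \in run A h n -> p.2 = h p.1.
Proof.
elim: n => [|n IH] /=; first by rewrite inE.
by case: (A _) => [x|//]; rewrite in_setU1 => /predU1P[-> //|/IH].
Qed.

Lemma run_query_mem h m n x :
  (m < n)%N -> A (run A h m) = Some x -> (x, h x) \in run A h n.
Proof.
by move=> m_lt query; apply: (subsetP (run_subset h m_lt)); rewrite /= query setU11.
Qed.

Lemma run_eq_agree h h' n :
  (forall m x, (m < n)%N -> A (run A h m) = Some x -> A (run A h' m) = Some x ->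
     h x = h' x) ->
  run A h n = run A h' n.
Proof.
elim: n => [//|n IH] agree /=.
have run_n : run A h n = run A h' n.
  by apply: IH => m x /ltnW; apply: agree.
by rewrite run_n; case query: (A _) => [x|//]; rewrite (agree n x) // run_n.
Qed.

Lemma Sfinal_eq_of_cheap (H : {set {ffun X -> Y}}) (cost : X * Y -> R) h h' :
  (forall g p, g \in H -> p \in Sfinal A g -> cost p < phi cost p.1) ->
  h \in H -> h' \in H -> Sfinal A h = Sfinal A h'.
Proof.
move=> cheap hH h'H; apply: run_eq_agree => m x m_lt qh qh'.
exact: phi_lt_unique (cheap _ _ hH (run_query_mem m_lt qh))
                     (cheap _ _ h'H (run_query_mem m_lt qh')).
Qed.

End Runs.

End Observations.

Theorem lemma5 (R : realFieldType) (X Y : finType)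
    (H : {set {ffun X -> Y}}) (cost : X * Y -> R) (f : {set (X * Y)} -> R)
    (Q OPT : R) :
  H != set0 ->
  (forall p, 0 < cost p) ->
  (forall S, 0 <= f S) ->
  0 < Q ->
  submodular f ->
  f set0 = 0 ->
  is_OPT H cost f Q OPT ->
  OPT < phi_min cost ->
  exists x : X, Q / OPT <= uf H cost f Q x set0.
Proof.
move=> H_neq0 cost_gt0 f_ge0 Q_gt0 f_sub f0 [[A [A_feas A_cost]] _] OPT_lt_phi.
have cost_ge0 p : 0 <= cost p by apply: ltW.
have [h0 h0H] := set0Pn _ H_neq0; set S0 := Sfinal A h0; set g := truncf f Q.
have costS_le_OPT h : h \in H -> costS cost (Sfinal A h) <= OPT.
  by rewrite -A_cost; apply: costS_le_costA.
have cheap h p : h \in H -> p \in Sfinal A h -> cost p < phi cost p.1.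
  move=> hH pS; apply: le_lt_trans (cost_le_costS cost_ge0 pS) _.
  apply: le_lt_trans (costS_le_OPT h hH) (lt_le_trans OPT_lt_phi _).
  by apply: setmin_le; rewrite inE.
have g0 : g set0 = 0 by rewrite /g /truncf f0 (min_l (ltW Q_gt0)).
have Q_le_sum : Q <= \sum_(p in S0) g [set p].
  have [_ Q_le_f] := A_feas h0 h0H.
  have <- : g S0 = Q by rewrite /g /truncf (min_r Q_le_f).
  apply: subadd_le_sum_set1 g0 _ S0.
  exact: truncf_subadd (ltW Q_gt0) f_ge0 (submodular_subadd f_ge0 f_sub).
have [p0 p0S0] : exists p, p \in S0.
  by apply/set0Pn; apply: contraTneq Q_le_sum => ->; rewrite big_set0 -ltNge.
have costS0_gt0 : 0 < costS cost S0 by apply: lt_le_trans (cost_le_costS cost_ge0 p0S0).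
have [p pS0 share_le] := exists_ge_share costS0_gt0 Q_le_sum.
exists p.1; rewrite /uf vspace_set0; apply: le_setmin => // h hH.
have pSh : p \in Sfinal A h by rewrite (Sfinal_eq_of_cheap cheap hH h0H).
rewrite -(run_graph pSh) -surjective_pairing /delta setU0 -/g g0 subr0 ler_pdivlMr //.
apply: le_trans share_le; rewrite ler_pM2r // ler_pM2l // lef_pV2 ?posrE //.
  exact: costS_le_OPT.
exact: lt_le_trans (costS_le_OPT h0 h0H).
Qed.
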